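(* Let $\mathbb{T}=(T,\eta,\mu)$ be a monad on a category $\mathcal{K}$ with Eilenberg–Moore category $\mathsf{Alg}(\mathbb{T})$. Suppose there is a full subcategory $l:\mathcal{A}\hookrightarrow\mathcal{K}$ such that $\mathbb{T}$ is idempotent at every object of $\mathcal{A}$ (i.e. $\mu_a$ is an isomorphism for every $a\in\mathcal{A}$), and such that $\mathcal{A}$, viewed as a full subcategory of $\mathsf{Alg}(\mathbb{T})$ via $a\mapsto(a,\eta_a^{-1})$, is codense in $\mathsf{Alg}(\mathbb{T})$. Then $\mathbb{T}$ is generically idempotent; more precisely $T\cong\mathrm{Ran}_l l$.
   Context: A monad is generically idempotent if it is isomorphic to the codensity monad (the monad structure on $\mathrm{Ran}_l l$) of some full subcategory $l:\mathcal{A}\hookrightarrow\mathcal{K}$. An object $k$ is a fixed point of $\mathbb{T}$ if $\eta_k$ is an isomorphism; $\mathbb{T}$ is idempotent at $k$ iff $k$ is a fixed point, and fixed points form a full subcategory of $\mathsf{Alg}(\mathbb{T})$ (with structure map $\eta_k^{-1}$). A full subcategory $J:\mathcal{A}\hookrightarrow\mathcal{C}$ is codense if $\mathrm{Ran}_J J\cong\mathrm{id}_{\mathcal{C}}$. *)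

From Stdlib Require Import ProofIrrelevance.

Set Implicit Arguments.
Unset Strict Implicit.

Record Category := {
  Obj :> Type;
  Hom : Obj -> Obj -> Type;
  idm : forall a, Hom a a;
  comp : forall a b c, Hom b c -> Hom a b -> Hom a c;
  comp_idl : forall a b (f : Hom a b), comp (idm b) f = f;
  comp_idr : forall a b (f : Hom a b), comp f (idm a) = f;
  comp_assoc : forall a b c d (h : Hom c d) (g : Hom b c) (f : Hom a b),
      comp h (comp g f) = comp (comp h g) f }.

Arguments Hom {_} _ _.
Arguments idm {_} _.
Arguments comp {_ _ _ _} _ _.
Arguments comp_idl {_ _ _} _.
Arguments comp_idr {_ _ _} _.
Arguments comp_assoc {_ _ _ _ _} _ _ _.

Notation "g ∘ f" := (comp g f) (at level 40, left associativity).

Record Functor (C D : Category) := {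
  fobj :> C -> D;
  fmap : forall a b, Hom a b -> Hom (fobj a) (fobj b);
  fmap_id : forall a, fmap (idm a) = idm (fobj a);
  fmap_comp : forall a b c (g : Hom b c) (f : Hom a b),
      fmap (g ∘ f) = fmap g ∘ fmap f }.

Arguments fmap {C D} _ {a b} _.
Arguments fmap_id {C D} _ a.
Arguments fmap_comp {C D} _ {a b c} _ _.

Definition IdFunctor (C : Category) : Functor C C :=
  {| fobj := fun x => x;
     fmap := fun a b f => f;
     fmap_id := fun a => eq_refl;
     fmap_comp := fun a b c g f => eq_refl |}.

(** A functor is fully faithful (the inclusion of a full subcategory). *)
Definition FullyFaithful (C D : Category) (F : Functor C D) : Prop :=
  forall a b : C,
    (forall f g : Hom a b, fmap F f = fmap F g -> f = g) /\
    (forall h : Hom (F a) (F b), exists f : Hom a b, fmap F f = h).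

Definition IsIso (C : Category) (a b : C) (f : Hom a b) : Prop :=
  exists g : Hom b a, g ∘ f = idm a /\ f ∘ g = idm b.

Definition IsRightKan (A B C : Category) (l : Functor A B) (F : Functor A C)
  (R : Functor B C) (eps : forall a : A, Hom (R (l a)) (F a)) : Prop :=
  (forall a a' (f : Hom a a'), eps a' ∘ fmap R (fmap l f) = fmap F f ∘ eps a) /\
  forall (S : Functor B C) (sigma : forall a : A, Hom (S (l a)) (F a)),
    (forall a a' (f : Hom a a'), sigma a' ∘ fmap S (fmap l f) = fmap F f ∘ sigma a) ->
    exists tau : forall b : B, Hom (S b) (R b),
      ((forall b b' (g : Hom b b'), tau b' ∘ fmap S g = fmap R g ∘ tau b) /\
       (forall a, eps a ∘ tau (l a) = sigma a)) /\
      (forall tau' : forall b : B, Hom (S b) (R b),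
         (forall b b' (g : Hom b b'), tau' b' ∘ fmap S g = fmap R g ∘ tau' b) ->
         (forall a, eps a ∘ tau' (l a) = sigma a) ->
         forall b, tau' b = tau b).
Arguments IsRightKan {A B C} l F R eps.

Definition Codense (A C : Category) (J : Functor A C) : Prop :=
  IsRightKan J J (IdFunctor C) (fun a => idm (J a)).

Record Monad (K : Category) := {
  T : Functor K K;
  eta : forall x : K, Hom x (T x);
  mu : forall x : K, Hom (T (T x)) (T x);
  eta_nat : forall x y (f : Hom x y), fmap T f ∘ eta x = eta y ∘ f;
  mu_nat : forall x y (f : Hom x y), fmap T f ∘ mu x = mu y ∘ fmap T (fmap T f);
  mu_eta_l : forall x, mu x ∘ eta (T x) = idm (T x);
  mu_eta_r : forall x, mu x ∘ fmap T (eta x) = idm (T x);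
  mu_assoc : forall x, mu x ∘ fmap T (mu x) = mu x ∘ mu (T x) }.

Arguments T {K} m.
Arguments eta {K} m x.
Arguments mu {K} m x.

(** [M] is the codensity monad of [l] (up to the identity isomorphism):
    there is a counit [eps : T l => l] exhibiting [T] as [Ran_l l], and the
    unit and multiplication of [M] are those of the codensity monad, i.e. the
    unique maps with [eps . eta_l = id] and [eps . mu_l = eps . T eps]. *)
Definition IsCodensityMonadOf (A K : Category) (l : Functor A K) (M : Monad K) : Prop :=
  exists eps : forall a : A, Hom (T M (l a)) (l a),
    IsRightKan l l (T M) eps /\
    (forall a, eps a ∘ eta M (l a) = idm (l a)) /\
    (forall a, eps a ∘ mu M (l a) = eps a ∘ fmap (T M) (eps a)).
Arguments IsCodensityMonadOf {A K} l M.

Definition GenericallyIdempotent (K : Category) (M : Monad K) : Prop :=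
  exists (A : Category) (l : Functor A K), FullyFaithful l /\ IsCodensityMonadOf l M.

Record Algebra (K : Category) (M : Monad K) := {
  acar : K;
  astr : Hom (T M acar) acar;
  alg_unit : astr ∘ eta M acar = idm acar;
  alg_assoc : astr ∘ mu M acar = astr ∘ fmap (T M) astr }.

Arguments acar {K M} _.
Arguments astr {K M} _.

Definition AlgHom (K : Category) (M : Monad K) (X Y : Algebra M) :=
  { f : Hom (acar X) (acar Y) | f ∘ astr X = astr Y ∘ fmap (T M) f }.

Lemma alg_hom_eq (K : Category) (M : Monad K) (X Y : Algebra M) (f g : AlgHom X Y) :
  proj1_sig f = proj1_sig g -> f = g.
Proof.
  destruct f as [f Hf], g as [g Hg]; simpl; intros E; subst g.
  f_equal; apply proof_irrelevance.
Qed.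

Section AlgCat.
Variables (K : Category) (M : Monad K).

Definition alg_id (X : Algebra M) : AlgHom X X.
Proof.
  exists (idm (acar X)). rewrite fmap_id, comp_idl, comp_idr. reflexivity.
Defined.

Definition alg_comp (X Y Z : Algebra M) (g : AlgHom Y Z) (f : AlgHom X Y) : AlgHom X Z.
Proof.
  exists (proj1_sig g ∘ proj1_sig f).
  destruct g as [g Hg], f as [f Hf]; simpl.
  rewrite <- comp_assoc, Hf, comp_assoc, Hg, <- comp_assoc, <- fmap_comp.
  reflexivity.
Defined.

Definition AlgCat : Category.
Proof.
  refine {| Obj := Algebra M; Hom := @AlgHom K M; idm := alg_id; comp := alg_comp |}.
  - intros a b f; apply alg_hom_eq; simpl; apply comp_idl.
  - intros a b f; apply alg_hom_eq; simpl; apply comp_idr.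
  - intros a b c d h g f; apply alg_hom_eq; simpl; apply comp_assoc.
Defined.

End AlgCat.

Section FixFunctor.
Variables (K A : Category) (M : Monad K) (l : Functor A K)
  (inv : forall a : A, Hom (T M (l a)) (l a))
  (Hinv1 : forall a, inv a ∘ eta M (l a) = idm (l a))
  (Hinv2 : forall a, eta M (l a) ∘ inv a = idm (T M (l a))).

Lemma fix_mu_eq (a : A) : mu M (l a) = fmap (T M) (inv a).
Proof.
  rewrite <- (comp_idr (mu M (l a))).
  rewrite <- (fmap_id (T M)), <- (Hinv2 a), fmap_comp, comp_assoc, mu_eta_r.
  apply comp_idl.
Qed.

Definition fixAlg (a : A) : Algebra M.
Proof.
  refine {| acar := l a; astr := inv a; alg_unit := Hinv1 a |}.
  rewrite fix_mu_eq; reflexivity.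
Defined.

Lemma fix_hom_ok (a b : A) (f : Hom a b) :
  fmap l f ∘ inv a = inv b ∘ fmap (T M) (fmap l f).
Proof.
  rewrite <- (comp_idl (fmap l f ∘ inv a)), <- (Hinv1 b).
  rewrite <- !comp_assoc, (comp_assoc (eta M (l b))), <- eta_nat.
  rewrite <- comp_assoc, Hinv2, comp_idr. reflexivity.
Qed.

Definition FixFunctor : Functor A (AlgCat M).
Proof.
  refine {| fobj := (fixAlg : A -> AlgCat M);
            fmap := fun a b f => exist _ (fmap l f) (fix_hom_ok f) |}.
  - intros a; apply alg_hom_eq; simpl; apply fmap_id.
  - intros a b c g f; apply alg_hom_eq; simpl; apply fmap_comp.
Defined.

End FixFunctor.
Arguments FixFunctor {K A} M l inv Hinv1 Hinv2.

(* The codensity of A in Alg(T) says that natural transformations F S U => Id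
   on algebras, for any endofunctor S of K, correspond to their restrictions
   to A.  Transposing along the free-forgetful adjunction F -| U identifies
   such transformations with natural transformations S => U F = T, and their
   restrictions to A with natural transformations S l => l (an algebra map out
   of a free algebra is determined by its restriction along the unit).  Hence
   (T, eta_l^-1) is a right Kan extension of l along l, and its unit and
   multiplication are those of the codensity monad because mu_l = T eta_l^-1. *)

Definition IsNatural {C D : Category} (F G : Functor C D)
  (alpha : forall c : C, Hom (F c) (G c)) : Prop :=
  forall a b (f : Hom a b), alpha b ∘ fmap F f = fmap G f ∘ alpha a.

Section FreeAlgebras.
Context {K : Category} {M : Monad K}.

Definition freeAlg (x : K) : Algebra M.
Proof.
  refine {| acar := T M x; astr := mu M x; alg_unit := mu_eta_l M x |}.
  symmetry; apply mu_assoc.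
Defined.

Definition freeMap {x y : K} (f : Hom x y) : AlgHom (freeAlg x) (freeAlg y).
Proof. exists (fmap (T M) f). apply mu_nat. Defined.

Definition free_ext (X : Algebra M) {y : K} (g : Hom y (acar X)) :
  AlgHom (freeAlg y) X.
Proof.
  exists (astr X ∘ fmap (T M) g); simpl.
  rewrite fmap_comp, (comp_assoc (astr X)), <- alg_assoc.
  rewrite <- !comp_assoc, mu_nat. reflexivity.
Defined.

Lemma free_ext_eta (X : Algebra M) {y : K} (g : Hom y (acar X)) :
  proj1_sig (free_ext X g) ∘ eta M y = g.
Proof.
  simpl. rewrite <- comp_assoc, eta_nat, comp_assoc, alg_unit. apply comp_idl.
Qed.

Lemma alg_comp_free_ext {X Y : Algebra M} (h : AlgHom X Y) {y : K}
    (g : Hom y (acar X)) :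
  alg_comp h (free_ext X g) = free_ext Y (proj1_sig h ∘ g).
Proof.
  apply alg_hom_eq; destruct h as [h Hh]; simpl.
  rewrite comp_assoc, Hh, fmap_comp. symmetry; apply comp_assoc.
Qed.

Lemma free_ext_freeMap (X : Algebra M) {x y : K} (g : Hom y (acar X))
    (f : Hom x y) :
  alg_comp (free_ext X g) (freeMap f) = free_ext X (g ∘ f).
Proof.
  apply alg_hom_eq; simpl. rewrite fmap_comp. symmetry; apply comp_assoc.
Qed.

(* [FreeLift S] is F S U. *)
Definition FreeLift (S : Functor K K) : Functor (AlgCat M) (AlgCat M).
Proof.
  refine {| fobj := (fun X : AlgCat M => freeAlg (S (acar X)) : AlgCat M);
            fmap := fun X Y h => freeMap (fmap S (proj1_sig h)) |}.
  - intros X; apply alg_hom_eq; simpl. rewrite !fmap_id. reflexivity.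
  - intros X Y Z g f; apply alg_hom_eq; simpl. rewrite !fmap_comp. reflexivity.
Defined.

Section Transpose.
Context {S : Functor K K}.

Definition lift_trans (tau : forall x : K, Hom (S x) (T M x)) :
  forall X : AlgCat M, Hom (FreeLift S X) X :=
  fun X => free_ext X (astr X ∘ tau (acar X)).

Definition lower_trans (rho : forall X : AlgCat M, Hom (FreeLift S X) X) :
  forall x : K, Hom (S x) (T M x) :=
  fun x => proj1_sig (rho (freeAlg x)) ∘ (eta M (S (T M x)) ∘ fmap S (eta M x)).

Lemma lift_trans_natural {tau : forall x : K, Hom (S x) (T M x)} :
  IsNatural S (T M) tau -> IsNatural (FreeLift S) (IdFunctor _) (lift_trans tau).
Proof.
  intros Htau X Y h; unfold lift_trans; simpl.
  rewrite free_ext_freeMap, alg_comp_free_ext, <- comp_assoc, Htau.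
  destruct h as [h Hh]; simpl.
  rewrite !comp_assoc, Hh. reflexivity.
Qed.

Lemma lower_trans_natural {rho : forall X : AlgCat M, Hom (FreeLift S X) X} :
  IsNatural (FreeLift S) (IdFunctor _) rho -> IsNatural S (T M) (lower_trans rho).
Proof.
  intros Hrho x y g; unfold lower_trans.
  assert (Hfree : proj1_sig (rho (freeAlg y)) ∘ fmap (T M) (fmap S (fmap (T M) g))
                 = fmap (T M) g ∘ proj1_sig (rho (freeAlg x)))
    by exact (f_equal (@proj1_sig _ _) (Hrho _ _ (freeMap g))).
  rewrite <- !comp_assoc, <- fmap_comp, <- eta_nat, fmap_comp.
  rewrite (comp_assoc (eta M (S (T M y)))), <- eta_nat, !comp_assoc.
  do 2 f_equal; exact Hfree.
Qed.

Lemma astr_lower_trans {rho : forall X : AlgCat M, Hom (FreeLift S X) X}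
    (X : Algebra M) :
  IsNatural (FreeLift S) (IdFunctor _) rho ->
  astr X ∘ lower_trans rho (acar X) = proj1_sig (rho X) ∘ eta M (S (acar X)).
Proof.
  intros Hrho; unfold lower_trans.
  (* [astr X] is itself an algebra map [freeAlg (acar X) -> X]. *)
  assert (Hastr : astr X ∘ proj1_sig (rho (freeAlg (acar X)))
                 = proj1_sig (rho X) ∘ fmap (T M) (fmap S (astr X))).
  { pose proof (f_equal (@proj1_sig _ _) (Hrho _ _ (free_ext X (idm (acar X))))) as E.
    simpl in E; rewrite fmap_id, comp_idr in E. symmetry; exact E. }
  transitivity (proj1_sig (rho X) ∘ fmap (T M) (fmap S (astr X))
                ∘ (eta M (S (T M (acar X))) ∘ fmap S (eta M (acar X)))).
  { rewrite comp_assoc; f_equal; exact Hastr. }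
  rewrite <- comp_assoc, (comp_assoc (fmap (T M) (fmap S (astr X)))), eta_nat.
  rewrite <- comp_assoc, <- fmap_comp, alg_unit, fmap_id, comp_idr.
  reflexivity.
Qed.

Lemma lower_lift_trans {tau : forall x : K, Hom (S x) (T M x)} (x : K) :
  IsNatural S (T M) tau -> lower_trans (lift_trans tau) x = tau x.
Proof.
  intros Htau; unfold lower_trans, lift_trans.
  rewrite comp_assoc, free_ext_eta; simpl.
  rewrite <- comp_assoc, Htau, comp_assoc, mu_eta_r. apply comp_idl.
Qed.

End Transpose.
End FreeAlgebras.

Lemma codense_fix_right_kan {K A : Category} {M : Monad K} {l : Functor A K}
  {inv : forall a : A, Hom (T M (l a)) (l a)}
  {Hinv1 : forall a, inv a ∘ eta M (l a) = idm (l a)}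
  {Hinv2 : forall a, eta M (l a) ∘ inv a = idm (T M (l a))} :
  Codense (FixFunctor M l inv Hinv1 Hinv2) -> IsRightKan l l (T M) inv.
Proof.
  intros [_ Hcod]; split.
  { intros a a' f. symmetry. apply (fix_hom_ok Hinv1 Hinv2). }
  intros S sigma Hsigma.
  set (J := FixFunctor M l inv Hinv1 Hinv2).
  set (sigma_alg := fun a : A =>
         (free_ext (J a) (sigma a) : Hom (FreeLift S (J a)) (J a))).
  destruct (Hcod (FreeLift S) sigma_alg) as [rho [[Hrho Hrho_J] Hrho_uniq]].
  { intros a a' f; unfold sigma_alg; simpl.
    rewrite free_ext_freeMap, alg_comp_free_ext, Hsigma. reflexivity. }
  exists (lower_trans rho); split; [split|].
  - exact (lower_trans_natural Hrho).
  - intros a.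
    assert (Hrho_a : rho (J a) = sigma_alg a)
      by (rewrite <- Hrho_J; symmetry; apply comp_idl).
    transitivity (proj1_sig (rho (J a)) ∘ eta M (S (l a))).
    { exact (astr_lower_trans (J a) Hrho). }
    rewrite Hrho_a. exact (free_ext_eta (J a) (sigma a)).
  - intros tau Htau Htau_J x.
    assert (Hlift : forall X, lift_trans tau X = rho X).
    { apply Hrho_uniq.
      - exact (lift_trans_natural Htau).
      - intros a; apply alg_hom_eq; simpl. rewrite comp_idl, Htau_J. reflexivity. }
    rewrite <- (lower_lift_trans x Htau).
    unfold lower_trans; rewrite Hlift. reflexivity.
Qed.

Theorem proposition5p5 (K A : Category) (M : Monad K) (l : Functor A K)
  (Hff : FullyFaithful l)
  (inv : forall a : A, Hom (T M (l a)) (l a))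
  (Hinv1 : forall a, inv a ∘ eta M (l a) = idm (l a))
  (Hinv2 : forall a, eta M (l a) ∘ inv a = idm (T M (l a)))
  (Hmu : forall a, IsIso (mu M (l a)))
  (Hcod : Codense (FixFunctor M l inv Hinv1 Hinv2)) :
  GenericallyIdempotent M /\ IsCodensityMonadOf l M.
Proof.
  (* [Hmu] is redundant: [mu M (l a) = fmap (T M) (inv a)] is invertible. *)
  assert (Hcodensity : IsCodensityMonadOf l M).
  { exists inv; split; [|split].
    - exact (codense_fix_right_kan Hcod).
    - exact Hinv1.
    - intros a; rewrite (fix_mu_eq Hinv2); reflexivity. }
  split; [exists A, l; split|]; assumption.
Qed.
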